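(* Let $(\mathcal A,\mathcal T,(-),\preceq)$ be a $\mathcal T$-system such that $(\mathcal A,\mathcal T,(-))$ is a meta-tangible $\mathcal T$-monoid module triple and $\mathcal A$ has height $2$. Then the system is strongly negated: for all $c,d\in\mathcal A$ with $\mathbb 0\preceq c+d$, either ($\mathbb 0\preceq c$ and $\mathbb 0\preceq d$), or $(-)c\preceq d$, or $(-)d\preceq c$.
   Context: $(\mathcal A,+,\mathbb 0)$ commutative monoid, $\mathcal T\subseteq\mathcal A\setminus\{\mathbb 0\}$. A negation map is $(-):\mathcal A\to\mathcal A$ with $(-)(b_1+b_2)=(-)b_1+(-)b_2$, $(-)((-)b)=b$, $(-)\mathbb 0=\mathbb 0$, $(-)\mathcal T\subseteq\mathcal T$. Write $b(-)c:=b+((-)c)$, $b^\circ:=b(-)b$, $\mathcal A^\circ=\{b^\circ:b\in\mathcal A\}$. A $\mathcal T$-triple $(\mathcal A,\mathcal T,(-))$: such data with an action $\mathcal T\times\mathcal A\to\mathcal A$ satisfying $a(b_1+b_2)=ab_1+ab_2$, $a\mathbb 0=\mathbb 0$, $(-)(ab)=((-)a)b=a((-)b)$, with $\mathcal T\cap\mathcal A^\circ=\emptyset$ and every element of $\mathcal A$ a finite sum of elements of $\mathcal T$. It is a $\mathcal T$-monoid module triple if moreover $\mathcal T$ is a monoid with identity $\mathbb 1$ whose multiplication is the restriction of the action, $\mathbb 1b=b$ and $(a_1a_2)b=a_1(a_2b)$. Meta-tangible: $a+b\in\mathcal T$ for all $a,b\in\mathcal T$ with $b\neq(-)a$. A $\mathcal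 T$-surpassing relation $\preceq$ is a reflexive transitive relation on $\mathcal A$ with: (i) $b\preceq b+c^\circ$ for all $b,c$; (ii) $b_1\preceq b_2\Rightarrow(-)b_1\preceq(-)b_2$; (iii) $b_1\preceq b_2,\ b_1'\preceq b_2'\Rightarrow b_1+b_1'\preceq b_2+b_2'$; (iv) $a\in\mathcal T$, $b_1\preceq b_2\Rightarrow ab_1\preceq ab_2$; (v) $a\preceq b$ with $a,b\in\mathcal T$ implies $a=b$; (vi) $b^\circ\not\preceq a$ for all $b\in\mathcal A$, $a\in\mathcal T$. A $\mathcal T$-system is $(\mathcal A,\mathcal T,(-),\preceq)$ with $(\mathcal A,\mathcal T,(-))$ a $\mathcal T$-triple, $\preceq$ a $\mathcal T$-surpassing relation, and such that $\mathbb 0\preceq a+b$ with $a,b\in\mathcal T$ implies $b=(-)a$. Height of $c$: least $t$ with $c=\sum_{i=1}^ta_i$, $a_i\in\mathcal T$; height of $\mathcal A$: supremum over its elements. *)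

From Stdlib Require Import List Arith.
Import ListNotations.

(* Data of a T-system: carrier A, zero, addition, the tangible subset T
   (as a predicate), negation map, action T x A -> A (total function whose
   values matter only for tangible first argument), the unit 1 of T
   (used for monoid module triples), and the surpassing relation. *)
Record sysdata := {
  car : Type;
  zero : car;
  add : car -> car -> car;
  tang : car -> Prop;
  neg : car -> car;
  act : car -> car -> car;
  one : car;
  sur : car -> car -> Prop
}.

Section Defs.
Variable S : sysdata.
Local Notation A := (car S).
Local Notation "x + y" := (add S x y).
Local Notation "0" := (zero S).

Definition circ (b : A) : A := b + neg S b.

Definition sumlist (l : list A) : A := fold_right (add S) 0 l.

Definition sum_of_tang (c : A) (t : nat) : Prop :=
  exists l : list A, length l = t /\ Forall (tang S) l /\ c = sumlist l.

Definition has_height (c : A) (t : nat) : Prop :=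
  sum_of_tang c t /\ forall s, sum_of_tang c s -> t <= s.

Definition height_A (n : nat) : Prop :=
  (forall c t, has_height c t -> t <= n) /\ (exists c, has_height c n).

Definition comm_monoid : Prop :=
  (forall x y z, x + (y + z) = (x + y) + z) /\
  (forall x y, x + y = y + x) /\
  (forall x, 0 + x = x).

Definition negation_map : Prop :=
  (forall b1 b2, neg S (b1 + b2) = neg S b1 + neg S b2) /\
  (forall b, neg S (neg S b) = b) /\
  neg S 0 = 0 /\
  (forall a, tang S a -> tang S (neg S a)).

Definition T_triple : Prop :=
  comm_monoid /\
  (forall a, tang S a -> a <> 0) /\
  negation_map /\
  (forall a b1 b2, tang S a -> act S a (b1 + b2) = act S a b1 + act S a b2) /\
  (forall a, tang S a -> act S a 0 = 0) /\
  (forall a b, tang S a ->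
     neg S (act S a b) = act S (neg S a) b /\
     neg S (act S a b) = act S a (neg S b)) /\
  (forall a b, tang S a -> a <> circ b) /\
  (forall c : A, exists l : list A, Forall (tang S) l /\ c = sumlist l).

Definition T_monoid_module_triple : Prop :=
  T_triple /\
  tang S (one S) /\
  (forall a1 a2, tang S a1 -> tang S a2 -> tang S (act S a1 a2)) /\
  (forall a, tang S a -> act S a (one S) = a) /\
  (forall b, act S (one S) b = b) /\
  (forall a1 a2 b, tang S a1 -> tang S a2 ->
     act S (act S a1 a2) b = act S a1 (act S a2 b)).

Definition meta_tangible : Prop :=
  forall a b, tang S a -> tang S b -> b <> neg S a -> tang S (a + b).

Definition T_surpassing : Prop :=
  (forall b, sur S b b) /\
  (forall b1 b2 b3, sur S b1 b2 -> sur S b2 b3 -> sur S b1 b3) /\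
  (forall b c, sur S b (b + circ c)) /\
  (forall b1 b2, sur S b1 b2 -> sur S (neg S b1) (neg S b2)) /\
  (forall b1 b2 b1' b2', sur S b1 b2 -> sur S b1' b2' ->
     sur S (b1 + b1') (b2 + b2')) /\
  (forall a b1 b2, tang S a -> sur S b1 b2 -> sur S (act S a b1) (act S a b2)) /\
  (forall a b, tang S a -> tang S b -> sur S a b -> a = b) /\
  (forall b a, tang S a -> ~ sur S (circ b) a).

Definition T_system : Prop :=
  T_triple /\ T_surpassing /\
  (forall a b, tang S a -> tang S b -> sur S 0 (a + b) -> b = neg S a).

Definition strongly_negated : Prop :=
  forall c d, sur S 0 (c + d) ->
    (sur S 0 c /\ sur S 0 d) \/ sur S (neg S c) d \/ sur S (neg S d) c.

End Defs.

From Stdlib Require Import Arith Lia Classical.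

(* Height 2 and meta-tangibility force every element to be 0, tangible, or a
   quasi-zero a(-)a with a tangible.  A relation 0 ⪯ c + d with both sides
   tangible, or both quasi-zeros, is then settled by the T-system axiom.  In
   the mixed case 0 ⪯ a° + d, meta-tangibility shows that d is absorbed by a
   or by (-)a unless d = a = (-)a.  In that last case (-) must be the
   identity, since otherwise 1 + 1 would be tangible and a(1 + 1) = a° would
   be tangible; one then analyses 3 = 1 + 1 + 1 and finds 3 = 0 or 3 = 2,
   either of which gives a ⪯ a°. *)

Local Notation "x +' y" := (add _ x y) (at level 50, left associativity).

Section HeightTwo.

Variable S : sysdata.
Hypothesis HT : T_triple S.

Lemma add_assoc (x y z : car S) : x +' (y +' z) = x +' y +' z.
Proof. exact (proj1 (proj1 HT) x y z). Qed.

Lemma add_comm (x y : car S) : x +' y = y +' x.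
Proof. exact (proj1 (proj2 (proj1 HT)) x y). Qed.

Lemma add_0_l (x : car S) : zero S +' x = x.
Proof. exact (proj2 (proj2 (proj1 HT)) x). Qed.

Lemma add_0_r (x : car S) : x +' zero S = x.
Proof. rewrite add_comm; apply add_0_l. Qed.

Lemma neg_add (x y : car S) : neg S (x +' y) = neg S x +' neg S y.
Proof. destruct HT as [_ [_ [[H _] _]]]; apply H. Qed.

Lemma neg_involutive (x : car S) : neg S (neg S x) = x.
Proof. destruct HT as [_ [_ [[_ [H _]] _]]]; apply H. Qed.

Lemma neg_0 : neg S (zero S) = zero S.
Proof. destruct HT as [_ [_ [[_ [_ [H _]]] _]]]; exact H. Qed.

Lemma tang_neg (a : car S) : tang S a -> tang S (neg S a).
Proof. destruct HT as [_ [_ [[_ [_ [_ H]]] _]]]; apply H. Qed.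

Lemma act_add_r (a x y : car S) :
  tang S a -> act S a (x +' y) = act S a x +' act S a y.
Proof. destruct HT as [_ [_ [_ [H _]]]]; apply H. Qed.

Lemma act_0_r (a : car S) : tang S a -> act S a (zero S) = zero S.
Proof. destruct HT as [_ [_ [_ [_ [H _]]]]]; apply H. Qed.

Lemma neg_act_l (a x : car S) :
  tang S a -> neg S (act S a x) = act S (neg S a) x.
Proof. destruct HT as [_ [_ [_ [_ [_ [H _]]]]]]; intro Ha; apply (H a x Ha). Qed.

Lemma tang_neq_circ (a b : car S) : tang S a -> a <> circ S b.
Proof. destruct HT as [_ [_ [_ [_ [_ [_ [H _]]]]]]]; apply H. Qed.

Lemma circ_neg (a : car S) : circ S (neg S a) = circ S a.
Proof. unfold circ; rewrite neg_involutive; apply add_comm. Qed.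

Lemma circ_0 : circ S (zero S) = zero S.
Proof. unfold circ; rewrite neg_0; apply add_0_l. Qed.

Lemma has_height_exists (c : car S) : exists t, has_height S c t.
Proof.
  destruct HT as [_ [_ [_ [_ [_ [_ [_ Hgen]]]]]]].
  assert (Hleast : forall n, sum_of_tang S c n -> exists t, has_height S c t).
  { induction n as [n IH] using lt_wf_ind; intro Hn.
    destruct (classic (forall s, sum_of_tang S c s -> n <= s)) as [Hmin | Hnmin].
    - exists n; split; assumption.
    - apply not_all_ex_not in Hnmin as [s Hs].
      apply imply_to_and in Hs as [Hs Hlt].
      apply (IH s); [lia | exact Hs]. }
  destruct (Hgen c) as [l [Hl Hc]].
  apply (Hleast (length l)); exists l; auto.
Qed.

Lemma height_le_2_cases :
  (forall c t, has_height S c t -> t <= 2) ->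
  forall c : car S, c = zero S \/ tang S c \/
    exists p q, tang S p /\ tang S q /\ c = p +' q.
Proof.
  intros Hh c.
  destruct (has_height_exists c) as [t Ht].
  pose proof (Hh c t Ht) as Hle.
  destruct Ht as [[l [Hlen [Hl ->]]] _]; subst t.
  destruct l as [| p [| q [| r l]]]; simpl in Hle |- *.
  - left; reflexivity.
  - inversion Hl; subst. right; left; rewrite add_0_r; assumption.
  - inversion Hl as [| ? ? Hp Hq']; inversion Hq'; subst.
    right; right; exists p, q; rewrite add_0_r; auto.
  - lia.
Qed.

Hypothesis Hmeta : meta_tangible S.
Hypothesis Hh : height_A S 2.

Lemma height_2_cases (c : car S) :
  c = zero S \/ tang S c \/ exists p, tang S p /\ c = circ S p.
Proof.
  destruct (height_le_2_cases (proj1 Hh) c) as [? | [? | [p [q [Hp [Hq ->]]]]]]; auto.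
  destruct (classic (q = neg S p)) as [-> | Hqp].
  - right; right; exists p; auto.
  - right; left; apply Hmeta; assumption.
Qed.

Hypothesis Hmod : T_monoid_module_triple S.

Lemma tang_one : tang S (one S).
Proof. exact (proj1 (proj2 Hmod)). Qed.

Lemma tang_act (a b : car S) : tang S a -> tang S b -> tang S (act S a b).
Proof. apply (proj1 (proj2 (proj2 Hmod))). Qed.

Lemma act_one_r (a : car S) : tang S a -> act S a (one S) = a.
Proof. apply (proj1 (proj2 (proj2 (proj2 Hmod)))). Qed.

Lemma act_one_l (x : car S) : act S (one S) x = x.
Proof. apply (proj1 (proj2 (proj2 (proj2 (proj2 Hmod))))). Qed.

Lemma act_two (a : car S) :
  tang S a -> act S a (one S +' one S) = a +' a.
Proof. intro Ha; rewrite act_add_r, act_one_r by auto using tang_one; reflexivity. Qed.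

Lemma act_three (a : car S) :
  tang S a -> act S a (one S +' one S +' one S) = a +' a +' a.
Proof. intro Ha; rewrite !act_add_r, act_one_r by auto using tang_one; reflexivity. Qed.

Lemma neg_one_of_self_neg (a : car S) :
  tang S a -> a = neg S a -> one S = neg S (one S).
Proof.
  intros Ha Haa; apply NNPP; intro H1.
  assert (Htwo : tang S (act S a (one S +' one S)))
    by (apply tang_act; [| apply Hmeta]; auto using tang_one).
  rewrite act_two in Htwo by exact Ha.
  apply (tang_neq_circ _ a Htwo); unfold circ; rewrite <- Haa; reflexivity.
Qed.

Lemma neg_id_of_neg_one : one S = neg S (one S) -> forall x, neg S x = x.
Proof.
  intros H1 x.
  rewrite <- (act_one_l x) at 1.
  rewrite neg_act_l, <- H1 by exact tang_one; apply act_one_l.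
Qed.

Lemma three_eq_double (p : car S) :
  (forall x, neg S x = x) -> tang S p ->
  one S +' one S +' one S = p +' p -> p = one S.
Proof.
  intros Hid Hp H3; apply NNPP; intro Hp1.
  assert (H1p : tang S (one S +' p))
    by (apply Hmeta; [exact tang_one | exact Hp | rewrite Hid; exact Hp1]).
  destruct (classic (p = one S +' p)) as [Habs | Hnabs].
  - assert (Hp3 : p +' p +' p = p).
    { transitivity ((one S +' one S +' one S) +' p); [rewrite H3; reflexivity |].
      rewrite <- !add_assoc, <- !Habs; reflexivity. }
    apply (tang_neq_circ p (act S p p) Hp).
    unfold circ; rewrite Hid, <- act_add_r, <- H3, act_three by exact Hp.
    symmetry; exact Hp3.
  - assert (H4 : tang S (one S +' p +' p))
      by (apply Hmeta; [exact H1p | exact Hp | rewrite Hid; exact Hnabs]).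
    apply (tang_neq_circ _ (one S +' one S) H4).
    unfold circ; rewrite Hid, <- add_assoc, <- H3, !add_assoc; reflexivity.
Qed.

Hypothesis Hsur : T_surpassing S.

Lemma sur_refl (x : car S) : sur S x x.
Proof. exact (proj1 Hsur x). Qed.

Lemma sur_trans (x y z : car S) : sur S x y -> sur S y z -> sur S x z.
Proof. apply (proj1 (proj2 Hsur)). Qed.

Lemma sur_add_circ (x y : car S) : sur S x (x +' circ S y).
Proof. apply (proj1 (proj2 (proj2 Hsur))). Qed.

Lemma not_circ_sur_tang (x a : car S) : tang S a -> ~ sur S (circ S x) a.
Proof. intro Ha; apply (proj2 (proj2 (proj2 (proj2 (proj2 (proj2 (proj2 Hsur))))))); exact Ha. Qed.

Lemma zero_sur_circ (x : car S) : sur S (zero S) (circ S x).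
Proof. rewrite <- (add_0_l (circ S x)); apply sur_add_circ. Qed.

Lemma not_zero_sur_tang (a : car S) : tang S a -> ~ sur S (zero S) a.
Proof. rewrite <- circ_0; apply not_circ_sur_tang. Qed.

Hypothesis Hsum0 :
  forall a b, tang S a -> tang S b -> sur S (zero S) (a +' b) -> b = neg S a.

(* a° + d = (a + d) + (-)a with a + d tangible, so (-)a = (-)(a + d) absorbs (-)d. *)
Lemma neg_sur_circ_absorb (a d : car S) :
  tang S a -> tang S d -> d <> neg S a ->
  sur S (zero S) (circ S a +' d) -> sur S (neg S d) (circ S a).
Proof.
  intros Ha Hd Hda H0.
  assert (Had : tang S (a +' d)) by (apply Hmeta; assumption).
  assert (Habs : neg S a = neg S a +' neg S d).
  { rewrite <- neg_add; apply Hsum0; auto using tang_neg.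
    unfold circ in H0 |- *.
    rewrite <- add_assoc, (add_comm (neg S a) d), add_assoc in H0; exact H0. }
  replace (circ S a) with (neg S d +' circ S a) by
    (unfold circ; rewrite add_assoc, (add_comm (neg S d) a), <- add_assoc,
       (add_comm (neg S d)), <- Habs; reflexivity).
  apply sur_add_circ.
Qed.

Lemma self_neg_sur_circ (a : car S) :
  tang S a -> a = neg S a -> sur S (zero S) (circ S a +' a) -> sur S a (circ S a).
Proof.
  intros Ha Haa H0.
  pose proof (neg_id_of_neg_one (neg_one_of_self_neg a Ha Haa)) as Hid.
  assert (Hcirc : forall x, circ S x = x +' x) by (intro; unfold circ; rewrite Hid; reflexivity).
  assert (Hsur3 : sur S a (act S a (one S +' one S +' one S))).
  { rewrite act_three, <- add_assoc, <- Hcirc by exact Ha; apply sur_add_circ. }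
  rewrite Hcirc in H0.
  destruct (height_2_cases (one S +' one S +' one S)) as [H3 | [H3 | [p [Hp H3]]]].
  - rewrite H3, act_0_r in Hsur3 by exact Ha.
    apply (sur_trans _ _ _ Hsur3), zero_sur_circ.
  - exfalso; apply (not_zero_sur_tang _ (tang_act _ _ Ha H3)).
    rewrite act_three; assumption.
  - rewrite Hcirc in H3.
    rewrite H3, (three_eq_double p Hid Hp H3) in Hsur3.
    rewrite act_two, <- Hcirc in Hsur3 by exact Ha; exact Hsur3.
Qed.

Lemma neg_sur_circ (a d : car S) :
  tang S a -> tang S d -> sur S (zero S) (circ S a +' d) -> sur S (neg S d) (circ S a).
Proof.
  intros Ha Hd H0.
  destruct (classic (d = neg S a)) as [Hda | Hda].
  - destruct (classic (d = a)) as [-> | Hnda].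
    + rewrite <- Hda; apply self_neg_sur_circ; assumption.
    + rewrite <- circ_neg in H0 |- *.
      apply neg_sur_circ_absorb; auto using tang_neg.
      rewrite neg_involutive; exact Hnda.
  - apply neg_sur_circ_absorb; assumption.
Qed.

Lemma strongly_negated_of_height_2 : strongly_negated S.
Proof.
  intros c d H0.
  destruct (height_2_cases c) as [-> | [Hc | [p [Hp ->]]]];
    destruct (height_2_cases d) as [-> | [Hd | [q [Hq ->]]]].
  - left; split; apply sur_refl.
  - rewrite add_0_l in H0; left; split; [apply sur_refl | exact H0].
  - left; split; [apply sur_refl | apply zero_sur_circ].
  - rewrite add_0_r in H0; left; split; [exact H0 | apply sur_refl].
  - right; left; rewrite (Hsum0 c d Hc Hd H0); apply sur_refl.
  - right; left; apply neg_sur_circ; [| | rewrite add_comm]; assumption.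
  - left; split; [apply zero_sur_circ | apply sur_refl].
  - right; right; apply neg_sur_circ; assumption.
  - left; split; apply zero_sur_circ.
Qed.

End HeightTwo.

Theorem proposition7p41 (S : sysdata) :
  T_system S -> T_monoid_module_triple S -> meta_tangible S -> height_A S 2 ->
  strongly_negated S.
Proof.
  intros [HT [Hsur Hsum0]] Hmod Hmeta Hh.
  exact (strongly_negated_of_height_2 S HT Hmeta Hh Hmod Hsur Hsum0).
Qed.
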